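(* Let $G=\vec{C}_5^{1,2}$, fix $n\ge 2$ and $a\in\mathbb Z_5$. For a word $w=(\varepsilon_1,\dots,\varepsilon_n)\in\{1,2\}^n$ let $e_w=e_{a,\,a+\varepsilon_1,\,a+\varepsilon_1+\varepsilon_2,\,\ldots,\,a+\varepsilon_1+\cdots+\varepsilon_n}$ (mod $5$); these are exactly the allowed $n$-paths starting at $a$, and they span $A_n(a)$. Let $\Omega_n(a):=\Omega_n(G)\cap A_n(a)$. If $P=\sum_w c_w e_w\in\Omega_n(a)$, then: (1) $c_w=0$ whenever $w$ contains two consecutive letters $22$; (2) whenever $w$ and $w'$ differ only by exchanging an adjacent pair $12\leftrightarrow 21$ at positions $j,j+1$ (all other letters equal), $c_w+c_{w'}=0$; (3) consequently $c_w=0$ for every $w$ containing at least two letters $2$, and the coefficients of all words containing exactly one letter $2$ are determined by a single scalar. In particular $\dim_{\mathbb K}\Omega_n(a)\le 2$.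
   Context: GLMY path complex. Let $\mathbb K$ be a field of characteristic $0$ and $V$ a finite set. An elementary $n$-path is a sequence $(v_0,\dots,v_n)$, written $e_{v_0\cdots v_n}$; $\partial e_{v_0\cdots v_n}=\sum_{j=0}^n(-1)^j e_{v_0\cdots\widehat{v_j}\cdots v_n}$. Regular paths: elementary paths with $v_{k-1}=v_k$ for some $k$ are set to $0$. For a loopless digraph $G=(V,E)$, $A_n(G)$ is the span of elementary paths with $(v_k\to v_{k+1})\in E$ for all $k$; $\Omega_0=A_0$, $\Omega_1=A_1$, $\Omega_n(G)=\{u\in A_n(G):\partial u\in A_{n-1}(G)\}$ for $n\ge2$. The circulant digraph $\vec C_5^{1,2}$ has vertex set $\mathbb Z_5$ and arrows $a\to a+1$, $a\to a+2$ for all $a$. *)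

From HB Require Import structures.
From mathcomp Require Import all_boot all_order all_algebra.
Set Implicit Arguments. Unset Strict Implicit. Unset Printing Implicit Defensive.
Import Order.TTheory GRing.Theory Num.Theory.
Local Open Scope ring_scope.

(* An n-chain is a function u : seq V -> K (coefficient of each elementary
   path), finitely supported automatically since V is finite and we require
   support on paths of length n.+1. Non-regular elementary paths are 0 in the
   regular path space, so chains are supported on regular paths and the
   boundary drops non-regular terms. *)

Section GLMY.
Variables (K : fieldType) (V : finType).

Definition regular (s : seq V) : bool :=
  if s is x :: s' then path (fun a b => a != b) x s' else false.

Definition allowed (E : rel V) (s : seq V) : bool :=
  if s is x :: s' then path E x s' else false.

Definition ins (j : nat) (x : V) (t : seq V) : seq V :=
  take j t ++ x :: drop j t.

Definition in_A (E : rel V) (n : nat) (u : seq V -> K) : Prop :=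
  forall s, u s != 0 -> size s = n.+1 /\ allowed E s.

(* boundary on regular chains:
   d e_{v0..vm} = sum_j (-1)^j e_{v0..^vj..vm}, non-regular terms set to 0;
   the coefficient of t in d u is sum_j sum_x (-1)^j u(t with x inserted at j) *)
Definition bd (u : seq V -> K) : seq V -> K := fun t =>
  if regular t then
    \sum_(j < (size t).+1) \sum_(x : V) (-1) ^+ j * u (ins j x t)
  else 0.

Definition in_Omega (E : rel V) (n : nat) (u : seq V -> K) : Prop :=
  in_A E n u /\ ((2 <= n)%N -> in_A E n.-1 (bd u)).

Definition in_Omega_at (E : rel V) (n : nat) (a : V) (u : seq V -> K) : Prop :=
  in_Omega E n u /\ (forall s, u s != 0 -> head a s = a).

End GLMY.

Definition Z5 := 'Z_5.
Definition C512 : rel Z5 := fun u v => (v == u + 1) || (v == u + 2).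

Definition word (n : nat) (w : seq nat) : Prop :=
  size w = n /\ all (fun e => (e == 1)%N || (e == 2)%N) w.

Definition epath (a : Z5) (w : seq nat) : seq Z5 :=
  a :: scanl (fun v (e : nat) => v + e%:R) a w.

From HB Require Import structures.
From mathcomp Require Import all_boot all_order all_algebra.
From mathcomp Require Import zify.
Set Implicit Arguments. Unset Strict Implicit. Unset Printing Implicit Defensive.
Import Order.TTheory GRing.Theory Num.Theory.
Local Open Scope ring_scope.

(* If P lies in Omega_n, its boundary vanishes on every non-allowed path.  For
   t = ... b y ... with b -> y not an arrow, the coefficient of t in the boundary of P
   is, up to sign, the sum of the coefficients of the paths ... b x y ... over the
   x with b -> x -> y.  In C_5^{1,2} the vertex b + 4 is reached in two steps only
   through b + 2, and b + 3 only through b + 1 and b + 2: this gives (1) and (2).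
   By (2) a letter 2 moves to the front of a word at the cost of a sign, and two
   letters 2 brought together form 22, which gives (3); so P is determined by its
   coefficient on 1^n and on 2 1^(n-1). *)

Section FaceRelation.
Variables (K : fieldType) (V : finType) (E : rel V).

Lemma ins_catl j x (s1 s2 : seq V) :
  (j <= size s1)%N -> ins j x (s1 ++ s2) = ins j x s1 ++ s2.
Proof.
elim: s1 j => [|h s1 IH] [|j] //= le_j; first by rewrite /ins take0 drop0.
by move: (IH j le_j); rewrite /ins /= => ->.
Qed.

Lemma ins_catr m x (s1 s2 : seq V) :
  ins (size s1 + m) x (s1 ++ s2) = s1 ++ ins m x s2.
Proof. by elim: s1 => //= h s1 IH; rewrite /ins /= -IH. Qed.

Lemma ins_elsewhere j x (p : seq V) b y q : j != (size p).+1 ->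
  exists l1 l2, ins j x (p ++ b :: y :: q) = l1 ++ b :: y :: l2.
Proof.
case: (ltnP j (size p).+1) => [le_j _ | lt_j ne_j].
  by exists (ins j x p), q; rewrite ins_catl.
have [m ->] : exists m, j = (size (p ++ [:: b; y]) + m)%N.
  by exists (j - (size p).+2)%N; rewrite size_cat /=; lia.
exists p, (ins m x q).
by rewrite -[p ++ _ :: _ :: q]/(p ++ [:: b; y] ++ q) catA ins_catr -catA.
Qed.

Lemma ins_between x (p : seq V) b y q :
  ins (size p).+1 x (p ++ b :: y :: q) = p ++ b :: x :: y :: q.
Proof.
by move: (ins_catr 0 x (rcons p b) (y :: q)); rewrite size_rcons addn0 !cat_rcons.
Qed.

Lemma allowed_edge (p : seq V) b y q : allowed E (p ++ b :: y :: q) -> E b y.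
Proof.
case: p => [|h p] /=; first by case/andP.
by rewrite cat_path /= => /and3P[_ _ /andP[]].
Qed.

Lemma allowed_edge2 (p : seq V) b x y q :
  allowed E (p ++ b :: x :: y :: q) -> E b x && E x y.
Proof.
move=> al; rewrite (allowed_edge al).
by move: al; rewrite -cat_rcons; apply: allowed_edge.
Qed.

Lemma regular_contract (p : seq V) b x y q : b != y ->
  regular (p ++ b :: x :: y :: q) -> regular (p ++ b :: y :: q).
Proof.
move=> neq_by; case: p => [|h p] /=.
  by case/and3P => _ _ ->; rewrite neq_by.
by rewrite !cat_path /= => /andP[-> /and4P[-> _ _ ->]]; rewrite neq_by.
Qed.

Hypothesis E_irrefl : irreflexive E.

Lemma allowed_regular (s : seq V) : allowed E s -> regular s.
Proof.
by case: s => //= h s; apply: sub_path => u v; apply: contraTneq => ->; rewrite E_irrefl.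
Qed.

Lemma in_A_eq0 m (u : seq V -> K) s : in_A E m u -> ~~ allowed E s -> u s = 0.
Proof. by move=> uA; apply: contraNeq => /uA[_ ->]. Qed.

Lemma Omega_face_sum m (u : seq V -> K) p b y q :
  in_Omega E m u -> (2 <= m)%N -> ~~ E b y -> b != y ->
  \sum_(x | E b x && E x y) u (p ++ b :: x :: y :: q) = 0.
Proof.
move=> [uA bdA] m2 nE_by neq_by; set t := p ++ b :: y :: q.
have bd_t : bd u t = 0.
  by apply: (in_A_eq0 (bdA m2)); apply: contra nE_by; apply: allowed_edge.
have sum_all : \sum_x u (p ++ b :: x :: y :: q) = 0.
  have [t_reg | t_nreg] := boolP (regular t); last first.
    apply: big1 => x _; apply: (in_A_eq0 uA); apply: contra t_nreg => al.
    exact: regular_contract (allowed_regular al).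
  (* The coefficient of t in [bd u] is the signed sum over insertions between b and y;
     an insertion anywhere else keeps the non-arrow b y, so u vanishes there. *)
  have j0_lt : ((size p).+1 < (size t).+1)%N by rewrite size_cat /=; lia.
  move: bd_t; rewrite /bd t_reg (bigD1 (Ordinal j0_lt)) //=.
  rewrite [X in _ + X]big1 => [|j ne_j].
    rewrite addr0 -mulr_sumr => /eqP; rewrite mulf_eq0 signr_eq0 /= => /eqP sum0.
    by rewrite -[RHS]sum0; apply: eq_bigr => x _; rewrite ins_between.
  have ne_val : val j != (size p).+1 by apply: contraNneq ne_j => ej; apply/eqP/val_inj.
  apply: big1 => x _; have [l1 [l2 ->]] := ins_elsewhere x b y q ne_val.
  by rewrite (in_A_eq0 uA) ?mulr0 //; apply: contra nE_by; apply: allowed_edge.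
rewrite -[RHS]sum_all [RHS](bigID (fun x => E b x && E x y)) /=.
rewrite [X in _ = _ + X]big1 ?addr0 //.
by move=> x nE_bxy; apply: (in_A_eq0 uA); apply: contra nE_bxy; apply: allowed_edge2.
Qed.

End FaceRelation.

Definition step (v : Z5) (e : nat) : Z5 := v + e%:R.

Lemma C512_irrefl : irreflexive C512.
Proof. by case=> [[|[|[|[|[|//]]]]] ?]. Qed.

Lemma C512_two_steps_add4 (b x : Z5) :
  C512 b x && C512 x (b + 2%:R + 2%:R) = (x == b + 2%:R).
Proof. by move: b x; case=> [[|[|[|[|[|//]]]]] ?] [[|[|[|[|[|//]]]]] ?]. Qed.

Lemma C512_two_steps_add3 (b x : Z5) :
  C512 b x && C512 x (b + 1%:R + 2%:R) = (x == b + 1%:R) || (x == b + 2%:R).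
Proof. by move: b x; case=> [[|[|[|[|[|//]]]]] ?] [[|[|[|[|[|//]]]]] ?]. Qed.

Lemma C512_skip_add4 (b : Z5) : ~~ C512 b (b + 2%:R + 2%:R) /\ b != b + 2%:R + 2%:R.
Proof. by case: b => [[|[|[|[|[|//]]]]] ?]. Qed.

Lemma C512_skip_add3 (b : Z5) : ~~ C512 b (b + 1%:R + 2%:R) /\ b != b + 1%:R + 2%:R.
Proof. by case: b => [[|[|[|[|[|//]]]]] ?]. Qed.

Lemma foldl_step_last a w : last a (scanl step a w) = foldl step a w.
Proof. by elim: w a => //= e w IH a; apply: IH. Qed.

Lemma epath_cat2 a u e1 e2 v : epath a (u ++ e1 :: e2 :: v) =
  belast a (scanl step a u) ++ foldl step a u :: step (foldl step a u) e1 ::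
  step (step (foldl step a u) e1) e2 :: scanl step (step (step (foldl step a u) e1) e2) v.
Proof.
rewrite /epath -/step scanl_cat -cat_cons (lastI a (scanl step a u)) cat_rcons.
by rewrite foldl_step_last.
Qed.

Section CircleFaces.
Variables (K : fieldType) (m : nat) (P : seq Z5 -> K).
Hypotheses (P_Omega : in_Omega C512 m P) (m_ge2 : (2 <= m)%N).

Lemma Omega_coef22 a u v : P (epath a (u ++ [:: 2%N; 2%N] ++ v)) = 0.
Proof.
rewrite epath_cat2 /step; set b := foldl step a u.
set p := belast _ _; set q := scanl _ _ v.
have [nE neq] := C512_skip_add4 b.
have := Omega_face_sum C512_irrefl p q P_Omega m_ge2 nE neq.
by rewrite (eq_bigl _ _ (C512_two_steps_add4 b)) big_pred1_eq.
Qed.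

Lemma Omega_coef12 a u v :
  P (epath a (u ++ [:: 1%N; 2%N] ++ v)) + P (epath a (u ++ [:: 2%N; 1%N] ++ v)) = 0.
Proof.
rewrite !epath_cat2 /step (addrAC _ 2%:R); set b := foldl step a u.
set p := belast _ _; set q := scanl _ _ v.
have [nE neq] := C512_skip_add3 b.
have := Omega_face_sum C512_irrefl p q P_Omega m_ge2 nE neq.
rewrite (eq_bigl _ _ (C512_two_steps_add3 b)) (bigD1 (b + 1%:R)) ?eqxx //=.
rewrite (big_pred1 (b + 2%:R)) // => x.
by case: eqP => [->|_]; rewrite ?andbF ?andbT //=; apply/esym/negP => /eqP/addrI.
Qed.

End CircleFaces.

Definition letter12 (e : nat) : bool := (e == 1)%N || (e == 2)%N.

Lemma all12_split2 w : all letter12 w -> (2 \in w)%N ->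
  exists2 v, w = nseq (index 2%N w) 1%N ++ 2%N :: v & all letter12 v.
Proof.
elim: w => //= e w IH /andP[e12 w12]; rewrite in_cons.
case: (eqVneq e 2%N) => [-> | ne2] /=; first by exists w.
have -> : e = 1%N by move: e12; rewrite /letter12 (negbTE ne2) orbF => /eqP.
by move=> /IH [// | v ew v12]; exists v; rewrite // {1}ew.
Qed.

Lemma all12_count2_0 w :
  all letter12 w -> count_mem 2%N w = 0%N -> w = nseq (size w) 1%N.
Proof.
move=> w12 /count_memPn no2; apply/all_pred1P; apply/allP => e ew.
have /orP[/eqP -> // | /eqP e2] := allP w12 e ew.
by rewrite -e2 ew in no2.
Qed.

Section WordCoefficients.
Variables (R : pzRingType) (c : seq nat -> R).
Hypothesis c22 : forall u v, c (u ++ [:: 2%N; 2%N] ++ v) = 0.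
Hypothesis c12 : forall u v,
  c (u ++ [:: 1%N; 2%N] ++ v) + c (u ++ [:: 2%N; 1%N] ++ v) = 0.

Lemma coef_2_ones_2 k u v : c (u ++ 2%N :: nseq k 1%N ++ 2%N :: v) = 0.
Proof.
elim: k u => [|k IH] u; first exact: c22.
have := c12 u (nseq k 1%N ++ 2%N :: v).
by rewrite -[u ++ [:: 1%N, 2%N & _]]cat_rcons IH add0r.
Qed.

Lemma coef_ones_2 k u v :
  c (u ++ nseq k 1%N ++ 2%N :: v) = (-1) ^+ k * c (u ++ 2%N :: nseq k 1%N ++ v).
Proof.
elim: k u => [|k IH] u; first by rewrite mul1r.
rewrite -[u ++ nseq k.+1 1%N ++ _]cat_rcons IH cat_rcons.
move/eqP: (c12 u (nseq k 1%N ++ v)); rewrite addr_eq0 => /eqP /= ->.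
by rewrite exprS mulN1r mulrN mulNr.
Qed.

Lemma coef_count2_ge2 w : all letter12 w -> (2 <= count_mem 2%N w)%N -> c w = 0.
Proof.
move=> w12 two2.
have [|v ew v12] := all12_split2 w12; first by rewrite -has_pred1 has_count; lia.
have [|v' ev _] := all12_split2 v12.
  by rewrite -has_pred1 has_count; move: two2; rewrite ew count_cat count_nseq /=; lia.
by rewrite ew ev coef_2_ones_2.
Qed.

Lemma coef_count2_eq1 w : all letter12 w -> count_mem 2%N w = 1%N ->
  c w = (-1) ^+ index 2%N w * c (2%N :: nseq (size w).-1 1%N).
Proof.
move=> w12 one2.
have [|v ew v12] := all12_split2 w12; first by rewrite -has_pred1 has_count one2.
have v0 : count_mem 2%N v = 0%N by move: one2; rewrite ew count_cat count_nseq /=; lia.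
rewrite {1}ew (all12_count2_0 v12 v0) -[nseq _ _ ++ _]cat0s coef_ones_2 /= -nseqD.
by rewrite [in size w]ew size_cat size_nseq /= addnS.
Qed.

End WordCoefficients.

Definition word_of_path (s : seq Z5) : seq nat :=
  if s is h :: t then pairmap (fun x y : Z5 => val (y - x)) h t else [::].

Lemma word_of_epath a w : all letter12 w -> word_of_path (epath a w) = w.
Proof.
elim: w a => // e w IH a /andP[e12 w12].
rewrite -[LHS]/(val (step a e - a) :: word_of_path (epath (step a e) w)) IH //.
by rewrite /step addrC addKr; case/orP: e12 => /eqP ->.
Qed.

Lemma path_C512_scanl x s :
  path C512 x s -> exists2 w, s = scanl step x w & all letter12 w.
Proof.
elim: s x => [|y s IH] x /=; first by exists [::].
case/andP => /orP[] /eqP -> /IH[w -> w12].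
  by exists (1%N :: w); rewrite //= /step mulr1n.
by exists (2%N :: w).
Qed.

Lemma Omega_at_support (K : fieldType) n a (Q : seq Z5 -> K) s :
  in_Omega_at C512 n a Q -> Q s != 0 -> exists2 w, word n w & s = epath a w.
Proof.
move=> [[QA _] Q_at] Qs; have [size_s] := QA s Qs; have := Q_at s Qs.
case: s size_s Qs => // x s [size_s] _ /= -> /path_C512_scanl[w ew w12].
by exists w; rewrite ?ew //; split; rewrite // -size_s ew size_scanl.
Qed.

Section OmegaSpan.
Variables (K : fieldType) (n : nat) (a : Z5).

Definition ones_indicator : seq Z5 -> K := fun s => (s == epath a (nseq n 1%N))%:R.

Definition one2_sign : seq Z5 -> K := fun s =>
  let w := word_of_path s in
  if [&& s == epath a w, size w == n, all letter12 w & count_mem 2%N w == 1%N]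
  then (-1) ^+ index 2%N w else 0.

Lemma Omega_at_span (Q : seq Z5 -> K) : (2 <= n)%N -> in_Omega_at C512 n a Q ->
  Q =1 fun s => Q (epath a (nseq n 1%N)) * ones_indicator s
                + Q (epath a (2%N :: nseq n.-1 1%N)) * one2_sign s.
Proof.
move=> n_ge2 QO s; set c := fun w => Q (epath a w).
have c22 u v : c (u ++ [:: 2%N; 2%N] ++ v) = 0 := Omega_coef22 QO.1 n_ge2 a u v.
have c12 u v : c (u ++ [:: 1%N; 2%N] ++ v) + c (u ++ [:: 2%N; 1%N] ++ v) = 0 :=
  Omega_coef12 QO.1 n_ge2 a u v.
rewrite /ones_indicator /one2_sign.
have [-> | ne_ones] := eqVneq s (epath a (nseq n 1%N)).
  have ones12 : all letter12 (nseq n 1%N) by rewrite all_nseq orbT.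
  by rewrite word_of_epath // ones12 count_nseq /= !andbF mulr1 mulr0 addr0.
rewrite mulr0 add0r; case: ifP => [/and4P[/eqP es /eqP size_w w12 /eqP one2] | not_one2].
  by rewrite [in LHS]es -/(c _) (coef_count2_eq1 c12) // size_w mulrC.
rewrite mulr0; apply/eqP/negPn/negP => Qs.
have [w [size_w w12] es] := Omega_at_support QO Qs.
move: not_one2 ne_ones Qs; rewrite es word_of_epath // eqxx size_w eqxx w12 /=.
case: ltngtP => // [no2 | two2] _.
  by rewrite ltnS leqn0 in no2; rewrite (all12_count2_0 w12 (eqP no2)) size_w eqxx.
by rewrite -/(c w) (coef_count2_ge2 c22 c12) ?eqxx.
Qed.

End OmegaSpan.

Theorem mainTheorem2 (K : fieldType) (charK0 : [pchar K] =i pred0)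
  (n : nat) (hn : (2 <= n)%N) (a : Z5) (P : seq Z5 -> K)
  (HP : in_Omega_at C512 n a P) :
  let c := fun w => P (epath a w) in
  (forall u v, word n (u ++ [:: 2%N; 2%N] ++ v) ->
     c (u ++ [:: 2%N; 2%N] ++ v) = 0) /\
  (forall u v, word n (u ++ [:: 1%N; 2%N] ++ v) ->
     c (u ++ [:: 1%N; 2%N] ++ v) + c (u ++ [:: 2%N; 1%N] ++ v) = 0) /\
  (forall w, word n w -> (2 <= count_mem 2%N w)%N -> c w = 0) /\
  (exists lam : K, forall w, word n w -> count_mem 2%N w = 1%N ->
     c w = (-1) ^+ (index 2%N w) * lam) /\
  (exists b1 b2 : seq Z5 -> K, forall Q, in_Omega_at C512 n a Q ->
     exists l1 l2 : K, forall s, Q s = l1 * b1 s + l2 * b2 s).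
Proof.
move=> c.
have c22 u v : c (u ++ [:: 2%N; 2%N] ++ v) = 0 := Omega_coef22 HP.1 hn a u v.
have c12 u v : c (u ++ [:: 1%N; 2%N] ++ v) + c (u ++ [:: 2%N; 1%N] ++ v) = 0 :=
  Omega_coef12 HP.1 hn a u v.
split; first by move=> u v _; apply: c22.
split; first by move=> u v _; apply: c12.
split; first by move=> w [_ w12]; apply: coef_count2_ge2.
split.
  exists (c (2%N :: nseq n.-1 1%N)) => w [size_w w12] one2.
  by rewrite (coef_count2_eq1 c12) // size_w.
exists (ones_indicator K n a), (one2_sign K n a) => Q QO.
exists (Q (epath a (nseq n 1%N))), (Q (epath a (2%N :: nseq n.-1 1%N))).
exact: Omega_at_span.
Qed.
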